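(* Let $\mathcal{S}$ be a normal SPN over Boolean variables $X_1,\ldots,X_N$ and let $\mathcal{B}$, $\mathcal{A}_H$, $\mathcal{A}_X$ be the Bayesian network and ADDs constructed from $\mathcal{S}$ as described in the context. Then these ADDs encode local CPDs at each node of $\mathcal{B}$: for each hidden variable $H_v$, $\mathcal{A}_{H_v}$ is a probability distribution over the values of $H_v$; and for each observable variable $X$, every hidden variable labelling a node of $\mathcal{A}_X$ is a parent of $X$ in $\mathcal{B}$, and for every joint assignment $\mathbf{h}$ of the parents of $X$, following $\mathcal{A}_X$ from its root according to $\mathbf{h}$ leads to a terminal node which is a probability distribution over $X$; thus $\mathcal{A}_X$ represents a conditional distribution $\Pr(X\mid \mathrm{Pa}(X))$.
   Context: SPNs. Let $X_1,\ldots,X_N$ be Boolean variables. An SPN is a finite rooted DAG whose internal nodes are sum and product nodes, each edge $(v,u)$ out of a sum node carrying a weight $w_{v,u}\ge 0$, and whose terminal nodes are indicators $\mathbb{I}_{x_n},\mathbb{I}_{\bar x_n}$ or univariate distribution nodes over some $X_n$ with parameter $p\in[0,1]$ (value $p\mathbb{I}_{x_n}+(1-p)\mathbb{I}_{\bar x_n}$); products multiply, sum nodes take $\sum_u w_{v,u}\mathrm{val}(u)$, and $f_{\mathcal{S}}(\mathbf{x})$ is the root value with $\Pr_{\mathcal{S}}(\mathbf{x})=f_{\mathcal{S}}(\mathbf{x})/\sum_{\mathbf{x}'}f_{\mathcal{S}}(\mathbf{x}')$. The scope of a terminal node over $X_n$ is $\{X_n\}$; an internal node's scope is the union of its children's scopes.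 The SPN is over $X_1,\ldots,X_N$ if the root's scope is $\{X_1,\ldots,X_N\}$. It is normal if (1) it is complete (children of each sum node have equal scopes) and decomposable (children of each product node have pairwise disjoint scopes); (2) the weights leaving each sum node are nonnegative and sum to 1; (3) every terminal node is a univariate distribution node and every sum node has scope size at least 2. Construction. From a normal SPN $\mathcal{S}$ over $X_1,\ldots,X_N$ build a Bayesian network $\mathcal{B}$: its variables are the observable variables $X_1,\ldots,X_N$ and, for each sum node $v$ with children $u_1,\ldots,u_l$, a hidden variable $H_v$ with values $\{1,\ldots,l\}$; its edges are exactly $H_v\to X$ for each sum node $v$ and each $X\in\mathrm{scope}(v)$. The CPD of $H_v$ is the ADD (decision stump) $\mathcal{A}_{H_v}$ with root labelled $H_v$ whose $i$-th edge leads to a terminal with value $w_{v,u_i}$, i.e. $\Pr(H_v=i)=w_{v,u_i}$. The CPD of $X$ is the ADD $\mathcal{A}_X$ obtained by taking the subgraph of $\mathcal{S}$ induced by the nodes whose scope contains $X$ (in which each product node has exactly one child, by decomposability), contracting every product node (connecting each of its parents to its unique child and deleting it; if it is the root, its child becomes the root), turning each sum node $v$ into an ADD node labelled $H_v$ whose $i$-th out-edge goes to the image of its $i$-th child $u_i$, and keeping each terminal node (a univariate distribution over $X$) as an ADD terminal carrying that distribution. An ADD is a rooted DAG with internal nodes labelled by variables, a node labelled $Y$ having one out-edge per value of $Y$, evaluated by following edges according to an assignment. *)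

From mathcomp Require Import all_boot all_order all_algebra.
Unset Strict Implicit. Unset Printing Implicit Defensive.
Import Order.TTheory GRing.Theory Num.Theory.
Local Open Scope ring_scope.

(* Kind of a node: sum, product, indicator I_{x_n} (true) / I_{~x_n} (false),
   or univariate distribution node over X_n with parameter p. *)
Inductive spn_kind (N : nat) (R : Type) :=
| SumN | ProdN | IndN of 'I_N & bool | DistN of 'I_N & R.
Arguments SumN {N R}. Arguments ProdN {N R}. Arguments IndN {N R} _ _. Arguments DistN {N R} _ _.

(* A finite rooted graph: nodes, kinds, ordered children (the i-th child of a sum
   node is u_i), weight sw v i of the i-th out-edge of v, and a root. *)
Record spn (N : nat) (R : Type) := SPN {
  snode : finType;
  skind : snode -> spn_kind N R;
  sch : snode -> seq snode;
  sw : snode -> nat -> R;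
  sroot : snode }.
Arguments snode {N R} s. Arguments skind {N R} s _. Arguments sch {N R} s _.
Arguments sw {N R} s _ _. Arguments sroot {N R} s.

Definition is_sum {N R} (k : spn_kind N R) := if k is SumN then true else false.
Definition is_prod {N R} (k : spn_kind N R) := if k is ProdN then true else false.
Definition is_terminal {N R} (k : spn_kind N R) :=
  match k with IndN _ _ | DistN _ _ => true | _ => false end.
Definition term_var {N R} (k : spn_kind N R) : option 'I_N :=
  match k with IndN n _ => Some n | DistN n _ => Some n | _ => None end.

Definition sedge {N R} (S : spn N R) : rel (snode S) := fun u v => v \in sch S u.

(* scope of a node: the variables of the terminal nodes below it
   (= union of the children's scopes, unfolded on the finite DAG) *)
Definition scope {N R} (S : spn N R) (v : snode S) : {set 'I_N} :=
  [set n | [exists t, connect (sedge S) v t && (term_var (skind S t) == Some n)]].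

Definition spn_wf {N} {R : numDomainType} (S : spn N R) : Prop :=
  [/\ (forall u v, sedge S u v -> ~~ connect (sedge S) v u),
      (forall v, connect (sedge S) (sroot S) v),
      (forall t, is_terminal (skind S t) -> sch S t = [::]) &
      (forall t n p, skind S t = DistN n p -> 0 <= p <= 1)].

Definition spn_over {N R} (S : spn N R) : Prop := scope S (sroot S) = [set: 'I_N].

Definition complete {N R} (S : spn N R) : Prop :=
  forall v, is_sum (skind S v) -> forall u1 u2,
    u1 \in sch S v -> u2 \in sch S v -> scope S u1 = scope S u2.

Definition decomposable {N R} (S : spn N R) : Prop :=
  forall v, is_prod (skind S v) -> forall i j,
    (i < size (sch S v))%N -> (j < size (sch S v))%N -> i != j ->
    [disjoint scope S (nth v (sch S v) i) & scope S (nth v (sch S v) j)].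

Definition normal {N} {R : numDomainType} (S : spn N R) : Prop :=
  [/\ complete S, decomposable S,
      (forall v, is_sum (skind S v) ->
         (forall i, (i < size (sch S v))%N -> 0 <= sw S v i) /\
         \sum_(i < size (sch S v)) sw S v i = 1),
      (forall t n b, skind S t <> IndN n b) &
      (forall v, is_sum (skind S v) -> (2 <= #|scope S v|)%N)].

(* Internal nodes are labelled (alab a = Some Y) and have ordered out-edges
   (the i-th for value i of Y); terminal nodes (alab a = None) carry data aterm. *)
Record add (L D : Type) := ADD {
  anode : finType;
  alab : anode -> option L;
  asucc : anode -> seq anode;
  aterm : anode -> option D;
  aroot : option anode }.
Arguments anode {L D} a. Arguments alab {L D a} _. Arguments asucc {L D a} _.
Arguments aterm {L D a} _. Arguments aroot {L D} a.

Definition add_step {L D} (A : add L D) (h : L -> nat) (a : anode A) : option (anode A) :=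
  if alab a is Some y then onth (asucc a) (h y) else None.

Definition add_follow {L D} (A : add L D) (h : L -> nat) (k : nat) : option (anode A) :=
  iter k (fun o => obind (add_step A h) o) (aroot A).

Definition add_value {L} {R : numDomainType} (A : add L R) (h : L -> nat) (k : nat) : R :=
  odflt 0 (obind (@aterm L R A) (add_follow A h k)).

(* Hidden variable H_v is identified with the sum node v; its values {1..l} are
   encoded as 0..l-1 (position in sch S v). Edges: H_v -> X_n iff n in scope v. *)
Definition bn_parent {N R} (S : spn N R) (v : snode S) (n : 'I_N) : bool :=
  is_sum (skind S v) && (n \in scope S v).

(* CPD of H_v: decision stump; nodes: None (root, labelled H_v), Some i (terminal w_{v,u_i}) *)
Definition add_H {N R} (S : spn N R) (v : snode S) : add (snode S) R :=
  @ADD (snode S) R (option 'I_(size (sch S v)))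
    (fun a => if a is None then Some v else None)
    (fun a => if a is None then map Some (enum 'I_(size (sch S v))) else [::])
    (fun a => if a is Some i then Some (sw S v i) else None)
    (Some None).

(* CPD of X_n: induced subgraph on nodes whose scope contains X_n,
   product nodes contracted, sum nodes relabelled H_v, terminals kept. *)
Definition in_sub {N R} (S : spn N R) (n : 'I_N) (v : snode S) : bool := n \in scope S v.

Definition addX_pred {N R} (S : spn N R) (n : 'I_N) (v : snode S) : bool :=
  in_sub S n v && ~~ is_prod (skind S v).

Definition addX_node {N R} (S : spn N R) (n : 'I_N) := {v : snode S | addX_pred S n v}.

Fixpoint contr {N R} (S : spn N R) (n : 'I_N) (k : nat) (u : snode S) : snode S :=
  match k with
  | 0 => u
  | k'.+1 =>
      if is_prod (skind S u) then
        if ohead [seq c <- sch S u | in_sub S n c] is Some c then contr S n k' c else u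
      else u
  end.

Definition add_image {N R} (S : spn N R) (n : 'I_N) (u : snode S) : option (addX_node S n) :=
  insub (contr S n #|snode S| u).

Definition add_X {N R} (S : spn N R) (n : 'I_N) : add (snode S) ('I_N * R) :=
  @ADD (snode S) ('I_N * R) (addX_node S n)
    (fun a => if is_sum (skind S (val a)) then Some (val a) else None)
    (fun a => if is_sum (skind S (val a))
              then pmap (add_image S n) [seq c <- sch S (val a) | in_sub S n c]
              else [::])
    (fun a => if skind S (val a) is DistN m p then Some (m, p) else None)
    (add_image S n (sroot S)).

From mathcomp Require Import all_boot all_order all_algebra.
Import Order.TTheory GRing.Theory Num.Theory.
Local Open Scope ring_scope.

(* Following an assignment through A_X from a sum node v moves to (the contraction of)
   a child of v, because by completeness every child of v still has X in its scope.
   Each such move strictly shrinks the set of SPN descendants, since the SPN is acyclic,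
   so the walk stops after finitely many steps at a node that is neither a sum nor a
   product node: a distribution node, necessarily over X itself. The stump A_{H_v} is
   a probability distribution because the weights of a normal SPN are nonnegative and
   sum to one. *)

Lemma iter_obind_reaches {T : Type} (step : T -> option T) (rank : T -> nat) (P : pred T) :
  (forall a, ~~ P a -> exists2 b, step a = Some b & (rank b < rank a)%N) ->
  forall a, exists k t, iter k (obind step) (Some a) = Some t /\ P t.
Proof.
move=> dec a; elim: (rank a).+1 {-2}a (ltnSn (rank a)) => // m IH {}a lt_am.
case Pa: (P a); first by exists 0%N, a.
have [b ab lt_ba] := dec a (negbT Pa).
have [k [t [bt Pt]]] := IH b (leq_trans lt_ba lt_am).
by exists k.+1, t; rewrite iterSr /= ab.
Qed.

Lemma mem_ohead {T : eqType} (s : seq T) x : ohead s = Some x -> x \in s.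
Proof. by case: s => //= y s [->]; rewrite mem_head. Qed.

Definition descendants {N R} (S : spn N R) (x : snode S) : {set snode S} :=
  [set w | connect (sedge S) x w].

Section Normal_SPN.

Context {N : nat} {R : numDomainType} {S : spn N R}.
Hypotheses (wf_S : spn_wf S) (normal_S : normal S).

Lemma card_descendants_lt {u c w : snode S} :
  sedge S u c -> connect (sedge S) c w ->
  (#|descendants S w| < #|descendants S u|)%N.
Proof.
case: wf_S => acyclic _ _ _ uc cw.
apply: (@leq_trans #|descendants S c|.+1).
  rewrite ltnS; apply: subset_leq_card; apply/subsetP=> x; rewrite !inE.
  exact: connect_trans cw.
apply: proper_card; apply/properP; split.
  by apply/subsetP=> x; rewrite !inE; apply: connect_trans (connect1 uc).
by exists u; rewrite !inE ?connect0 //; apply: acyclic.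
Qed.

Lemma scope_child {v : snode S} {n : 'I_N} :
  term_var (skind S v) = None -> n \in scope S v ->
  exists2 c, c \in sch S v & n \in scope S c.
Proof.
move=> tv; rewrite inE => /existsP [t /andP [/connectP [p vp ->] tn]].
case: p vp tn => [|c p] /=; first by rewrite tv.
case/andP=> vc cp tn; exists c => //.
by rewrite inE; apply/existsP; exists (last c p); rewrite tn andbT; apply/connectP; exists p.
Qed.

Lemma scope_sum_child {v c : snode S} {n : 'I_N} :
  is_sum (skind S v) -> n \in scope S v -> c \in sch S v -> n \in scope S c.
Proof.
case: normal_S => complete_S _ _ _ _ sv nv cv.
have tv : term_var (skind S v) = None by move: sv; case: (skind S v).
have [c0 c0v nc0] := scope_child tv nv.
by rewrite (complete_S v sv c c0 cv c0v).
Qed.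

Lemma scope_leaf {t : snode S} {n : 'I_N} :
  sch S t = [::] -> n \in scope S t -> term_var (skind S t) = Some n.
Proof.
move=> t0; rewrite inE => /existsP [t' /andP [/connectP [p tp ->] /eqP tn]].
by case: p tp tn => [|c p] //=; rewrite /sedge t0.
Qed.

Variable n : 'I_N.

Lemma connect_contr k (u : snode S) : connect (sedge S) u (contr S n k u).
Proof.
elim: k u => [|k IH] u /=; first exact: connect0.
case: ifP => _; last exact: connect0.
case cE: ohead => [c|]; last exact: connect0.
move/mem_ohead: cE; rewrite mem_filter => /andP [_ uc].
exact: connect_trans (connect1 uc) (IH c).
Qed.

Lemma in_sub_contr k (u : snode S) : in_sub S n u -> in_sub S n (contr S n k u).
Proof.
elim: k u => [|k IH] u //= nu.
case: ifP => // _; case cE: ohead => [c|] //.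
by move/mem_ohead: cE; rewrite mem_filter => /andP [nc _]; apply: IH.
Qed.

Lemma contr_nonprod k (u : snode S) :
  in_sub S n u -> (#|descendants S u| <= k)%N -> ~~ is_prod (skind S (contr S n k u)).
Proof.
elim: k u => [|k IH] u /= nu hk.
  by move: hk; rewrite leqn0 => /eqP/cards0_eq/setP/(_ u); rewrite !inE connect0.
case: ifP => [pu|/negbT //].
have tu : term_var (skind S u) = None by move: pu; case: (skind S u).
have [c0 c0u nc0] := scope_child tu nu.
case cE: [seq c <- sch S u | in_sub S n c] => [|c s] /=.
  by have := mem_filter (in_sub S n) c0 (sch S u); rewrite cE /in_sub nc0 c0u.
have : c \in [seq c <- sch S u | in_sub S n c] by rewrite cE mem_head.
rewrite mem_filter => /andP [nc uc]; apply: IH => //.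
by rewrite -ltnS; apply: leq_trans hk; apply: card_descendants_lt uc (connect0 _ _).
Qed.

Lemma add_image_some {u : snode S} : in_sub S n u -> exists a, add_image S n u = Some a.
Proof.
move=> nu; rewrite /add_image; case: insubP => [a _ _|]; first by exists a.
rewrite /addX_pred in_sub_contr //=.
by rewrite contr_nonprod // max_card.
Qed.

Lemma connect_add_image {u : snode S} {a} :
  add_image S n u = Some a -> connect (sedge S) u (val a).
Proof. by rewrite /add_image; case: insubP => // b _ vb [<-]; rewrite vb; apply: connect_contr. Qed.

Lemma sub_sum_children {y : snode S} :
  is_sum (skind S y) -> in_sub S n y -> [seq c <- sch S y | in_sub S n c] = sch S y.
Proof. by move=> sy ny; apply/all_filterP/allP => c; apply: scope_sum_child. Qed.

Lemma size_asucc_sum {a : anode (add_X S n)} :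
  is_sum (skind S (val a)) -> size (asucc a) = size (sch S (val a)).
Proof.
have /andP [na _] := valP a; move=> sa /=; rewrite sa sub_sum_children //.
rewrite size_pmap -count_predT; apply: eq_in_count => c ac.
by have [b ->] := add_image_some (scope_sum_child sa na ac).
Qed.

Lemma add_X_step_lt (h : snode S -> nat) (a : anode (add_X S n)) :
  is_sum (skind S (val a)) -> (h (val a) < size (sch S (val a)))%N ->
  exists2 b, add_step (add_X S n) h a = Some b &
    (#|descendants S (val b)| < #|descendants S (val a)|)%N.
Proof.
move=> sa ha; rewrite -(size_asucc_sum sa) in ha.
have -> : add_step (add_X S n) h a = onth (asucc a) (h (val a)) by rewrite /add_step /= sa.
exists (nth a (asucc a) (h (val a))); first by rewrite onthE (nth_map a).
move: (mem_nth a ha); rewrite /= sa mem_pmap => /mapP [c].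
rewrite mem_filter => /andP [_ ac] /esym /connect_add_image.
exact: card_descendants_lt.
Qed.

Lemma add_X_leaf (a : anode (add_X S n)) :
  alab a = None -> exists p : R, aterm a = Some (n, p) /\ 0 <= p <= 1.
Proof.
case: wf_S normal_S => _ _ leaf_S dist_S [_ _ _ noind_S _].
have /andP [na npa] := valP a; rewrite /=; case: ifP => // sa _.
move: na npa sa; case aE: (skind S (val a)) => [| |m b|m p] //= na _ _.
  by case: (noind_S _ _ _ aE).
have leaf_a : sch S (val a) = [::] by apply: leaf_S; rewrite aE.
have := scope_leaf leaf_a na; rewrite aE => -[->].
by exists p; split=> //; apply: dist_S aE.
Qed.

Lemma add_X_parent (a : anode (add_X S n)) (y : snode S) :
  alab a = Some y -> bn_parent S y n /\ size (asucc a) = size (sch S y).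
Proof.
rewrite [alab a]/=; case: ifP => // sa [<-]; have /andP [na _] := valP a.
by split; [rewrite /bn_parent sa | exact: size_asucc_sum].
Qed.

Lemma add_X_follow_leaf (h : snode S -> nat) :
  spn_over S -> (forall v, bn_parent S v n -> (h v < size (sch S v))%N) ->
  exists k t, add_follow (add_X S n) h k = Some t /\ alab t = None /\
    exists p : R, aterm t = Some (n, p) /\ 0 <= p <= 1.
Proof.
move=> over_S h_range.
have [r rootE] : exists r, add_image S n (sroot S) = Some r.
  by apply: add_image_some; rewrite /in_sub over_S inE.
have [|k [t [kt /eqP t_leaf]]] := @iter_obind_reaches _ (add_step (add_X S n) h)
  (fun a => #|descendants S (val a)|) (fun a => alab a == None) _ r.
  move=> a; case sa: (is_sum (skind S (val a))); last by rewrite /= sa.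
  have a_parent : bn_parent S (val a) n by rewrite /bn_parent sa; exact: (andP (valP a)).1.
  by move=> _; apply: add_X_step_lt sa (h_range _ a_parent).
exists k, t; rewrite /add_follow [aroot _]/= rootE; split=> //.
by split=> //; apply: add_X_leaf.
Qed.

End Normal_SPN.

Lemma add_follow_add_H {N R} (S : spn N R) (v : snode S) (i : 'I_(size (sch S v))) :
  add_follow (add_H S v) (fun _ => val i) 1 = Some (Some i).
Proof.
rewrite /add_follow /= /add_step /= onth_map onthE (nth_map i) ?nth_ord_enum //.
by rewrite size_enum_ord.
Qed.

Theorem lemma5 (R : realFieldType) (N : nat) (S : spn N R) :
  spn_wf S -> spn_over S -> normal S ->
  (* A_{H_v} is a probability distribution over the values of H_v *)
  (forall v : snode S, is_sum (skind S v) ->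
     (forall i : 'I_(size (sch S v)), exists t,
        add_follow (add_H S v) (fun _ => val i) 1 = Some t /\
        alab t = None /\ exists d, aterm t = Some d /\ 0 <= d) /\
     \sum_(i < size (sch S v)) add_value (add_H S v) (fun _ => val i) 1 = 1) /\
  (* A_X is a CPD Pr(X | Pa(X)) *)
  (forall n : 'I_N,
     (forall (a : anode (add_X S n)) (y : snode S), alab a = Some y ->
        bn_parent S y n /\ size (asucc a) = size (sch S y)) /\
     (forall h : snode S -> nat,
        (forall v, bn_parent S v n -> (h v < size (sch S v))%N) ->
        exists k t, add_follow (add_X S n) h k = Some t /\ alab t = None /\
          exists p : R, aterm t = Some (n, p) /\ 0 <= p <= 1)).
Proof.
move=> wf over nm; split=> [v sv | n].
  have [w_ge0 w_sum1] := (let: And5 _ _ weights _ _ := nm in weights) v sv.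
  split=> [i|].
    exists (Some i); rewrite add_follow_add_H; do 2 split=> //.
    by exists (sw S v i); split=> //; apply: w_ge0.
  by rewrite -w_sum1; apply: eq_bigr => i _; rewrite /add_value add_follow_add_H.
split=> [a y | h h_range]; first exact: add_X_parent wf nm n a y.
exact: add_X_follow_leaf wf nm n h over h_range.
Qed.
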